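(* Let $a_1\in\mathbb C$, $a_2\in\mathbb R$, $\theta\in[0,2\pi)$ with $2|a_1|+|a_2|<\frac{1}{4(1+\varepsilon)^3}$, and $f(\zeta)=\big(e^{i\theta}\zeta,\ e^{2i\theta}\zeta(a_1+a_2\zeta+\overline{a_1}\zeta^2)\big)$. Then $f$ (restricted to $\overline\Delta$) is a stationary disc for the hypersurface $\partial\Omega\cap\{\rho=0\}$, i.e. $f(\partial\Delta)\subset\{\rho=0\}$ and there is a continuous function $c:\partial\Delta\to\mathbb R\setminus\{0\}$ such that $\zeta\mapsto\zeta c(\zeta)\partial\rho(f(\zeta))$ extends holomorphically to $\Delta$ (continuously up to $\partial\Delta$).
   Context: $\Delta$ denotes the unit disc in $\mathbb C$ and $\Delta_r$ the disc of radius $r$ centered at $0$. Fix $0<\varepsilon<\frac{1}{100}$. Let $\rho(z,w)=|z|^2+|w|^2-\operatorname{Re}(\bar z^4w^2)-1$ on $\mathbb C^2$, $\partial\rho=(\partial\rho/\partial z,\partial\rho/\partial w)$, and $\Omega=\{\rho<0\}\cap\big(\Delta_{1+\varepsilon}\times\Delta_{\frac{1}{4(1+\varepsilon)^3}}\big)$. *)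

From Stdlib Require Import Reals Lra.
Open Scope R_scope.

Record Cx := mkC { Re : R ; Im : R }.

Definition Cof (x : R) : Cx := mkC x 0.
Definition C0 : Cx := Cof 0.
Definition C1 : Cx := Cof 1.
Definition Cadd (u v : Cx) : Cx := mkC (Re u + Re v) (Im u + Im v).
Definition Copp (u : Cx) : Cx := mkC (- Re u) (- Im u).
Definition Csub (u v : Cx) : Cx := Cadd u (Copp v).
Definition Cmul (u v : Cx) : Cx :=
  mkC (Re u * Re v - Im u * Im v) (Re u * Im v + Im u * Re v).
Definition Cconj (u : Cx) : Cx := mkC (Re u) (- Im u).
Definition Cnorm (u : Cx) : R := sqrt (Re u * Re u + Im u * Im u).
Definition Cexpi (t : R) : Cx := mkC (cos t) (sin t).

Definition C2 := (Cx * Cx)%type.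

Definition rho (p : C2) : R :=
  let z := fst p in let w := snd p in
  let zb := Cconj z in
  Cnorm z ^ 2 + Cnorm w ^ 2
  - Re (Cmul (Cmul (Cmul zb zb) (Cmul zb zb)) (Cmul w w)) - 1.

(** Wirtinger derivative of a real function g : C2 -> R at p.
    dz g p = 1/2 (dg/dx1 - i dg/dy1), dw g p = 1/2 (dg/dx2 - i dg/dy2),
    where z = x1 + i y1, w = x2 + i y2.  [is_partial_vec g p v] says that the
    four real partial derivatives of g at p exist and that
    v = (dg/dz (p), dg/dw (p)). *)
Definition is_partial_vec (g : C2 -> R) (p : C2) (v : C2) : Prop :=
  let z := fst p in let w := snd p in
  exists gx1 gy1 gx2 gy2 : R,
    derivable_pt_lim (fun t => g (mkC t (Im z), w)) (Re z) gx1 /\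
    derivable_pt_lim (fun t => g (mkC (Re z) t, w)) (Im z) gy1 /\
    derivable_pt_lim (fun t => g (z, mkC t (Im w))) (Re w) gx2 /\
    derivable_pt_lim (fun t => g (z, mkC (Re w) t)) (Im w) gy2 /\
    fst v = mkC (gx1 / 2) (- gy1 / 2) /\
    snd v = mkC (gx2 / 2) (- gy2 / 2).

Definition C_differentiable_at (F : Cx -> Cx) (p : Cx) : Prop :=
  exists L : Cx, forall eps : R, 0 < eps -> exists delta : R, 0 < delta /\
    forall h : Cx, Cnorm h < delta ->
      Cnorm (Csub (Csub (F (Cadd p h)) (F p)) (Cmul L h)) <= eps * Cnorm h.

Definition holomorphic_on_disc (F : Cx -> C2) : Prop :=
  forall p : Cx, Cnorm p < 1 ->
    C_differentiable_at (fun q => fst (F q)) p /\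
    C_differentiable_at (fun q => snd (F q)) p.

Definition continuous_on_closed_disc (F : Cx -> C2) : Prop :=
  forall p : Cx, Cnorm p <= 1 ->
    forall eps : R, 0 < eps -> exists delta : R, 0 < delta /\
      forall q : Cx, Cnorm q <= 1 -> Cnorm (Csub q p) < delta ->
        Cnorm (Csub (fst (F q)) (fst (F p))) < eps /\
        Cnorm (Csub (snd (F q)) (snd (F p))) < eps.

Definition continuous_on_circle (c : Cx -> R) : Prop :=
  forall p : Cx, Cnorm p = 1 ->
    forall eps : R, 0 < eps -> exists delta : R, 0 < delta /\
      forall q : Cx, Cnorm q = 1 -> Cnorm (Csub q p) < delta ->
        Rabs (c q - c p) < eps.

Definition fdisc (a1 : Cx) (a2 th : R) (zeta : Cx) : C2 :=
  (Cmul (Cexpi th) zeta,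
   Cmul (Cmul (Cexpi (2 * th)) zeta)
        (Cadd (Cadd a1 (Cmul (Cof a2) zeta))
              (Cmul (Cconj a1) (Cmul zeta zeta)))).

Definition C2scale (s : Cx) (v : C2) : C2 := (Cmul s (fst v), Cmul s (snd v)).

Definition stationary_disc (g : C2 -> R) (f : Cx -> C2) : Prop :=
  (forall zeta : Cx, Cnorm zeta = 1 -> g (f zeta) = 0) /\
  exists c : Cx -> R,
    continuous_on_circle c /\
    (forall zeta : Cx, Cnorm zeta = 1 -> c zeta <> 0) /\
    exists F : Cx -> C2,
      holomorphic_on_disc F /\ continuous_on_closed_disc F /\
      forall zeta : Cx, Cnorm zeta = 1 ->
        exists v : C2, is_partial_vec g (f zeta) v /\
          F zeta = C2scale (Cmul zeta (Cof (c zeta))) v.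

(* On the unit circle, f(zeta) = (z, r z^2) with z = e^{i th} zeta unimodular and
   r = a2 + 2 Re (a1 conj zeta) real.  On such points rho vanishes and
   drho = ((1 - 2 r^2) conj z, 0).  Since |r| <= 2|a1| + |a2| < 1/4, the choice
   c = 1 / (1 - 2 r^2) is continuous and nonzero, and then
   zeta c drho(f(zeta)) = (e^{-i th}, 0) is constant, hence holomorphic. *)

From Stdlib Require Import Reals Lra Nsatz.
From Coquelicot Require Import Hierarchy Derive AutoDerive.
Open Scope R_scope.

Lemma Cx_eq (u v : Cx) : Re u = Re v -> Im u = Im v -> u = v.
Proof. destruct u, v; cbn; intros -> ->; reflexivity. Qed.

Lemma Cnorm_ge0 (u : Cx) : 0 <= Cnorm u.
Proof. apply sqrt_pos. Qed.

Lemma Cnorm_eq1 (u : Cx) : Cnorm u = 1 -> Re u * Re u + Im u * Im u = 1.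
Proof.
  unfold Cnorm; intro Hu.
  rewrite <- (sqrt_sqrt (Re u * Re u + Im u * Im u)) by nra.
  rewrite Hu; ring.
Qed.

Lemma Cnorm_Cmul (u v : Cx) : Cnorm (Cmul u v) = Cnorm u * Cnorm v.
Proof.
  unfold Cnorm; rewrite <- sqrt_mult by nra.
  f_equal; cbn; ring.
Qed.

Lemma Cnorm_Cexpi (t : R) : Cnorm (Cexpi t) = 1.
Proof.
  unfold Cnorm; cbn.
  rewrite <- sqrt_1; f_equal.
  pose proof (sin2_cos2 t); unfold Rsqr in *; lra.
Qed.

Lemma Cnorm_Csub_diag (u : Cx) : Cnorm (Csub u u) = 0.
Proof.
  unfold Cnorm; cbn.
  rewrite <- sqrt_0; f_equal; ring.
Qed.

Lemma Rabs_inner_le (u v : Cx) :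
  Rabs (Re u * Re v + Im u * Im v) <= Cnorm u * Cnorm v.
Proof.
  unfold Cnorm; rewrite <- sqrt_mult by nra.
  rewrite <- sqrt_Rsqr_abs; apply sqrt_le_1_alt; unfold Rsqr.
  pose proof (pow2_ge_0 (Re u * Im v - Im u * Re v)); nra.
Qed.

Lemma C_differentiable_at_const (v p : Cx) : C_differentiable_at (fun _ => v) p.
Proof.
  exists C0; intros e He; exists 1; split; [lra|]; intros h _.
  replace (Csub (Csub v v) (Cmul C0 h)) with (Csub C0 C0)
    by (apply Cx_eq; cbn; ring).
  rewrite Cnorm_Csub_diag; pose proof (Cnorm_ge0 h); nra.
Qed.

Lemma holomorphic_on_disc_const (v : C2) : holomorphic_on_disc (fun _ => v).
Proof. split; apply C_differentiable_at_const. Qed.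

Lemma continuous_on_closed_disc_const (v : C2) :
  continuous_on_closed_disc (fun _ => v).
Proof.
  intros p _ e He; exists 1; split; [lra|]; intros q _ _.
  rewrite !Cnorm_Csub_diag; lra.
Qed.

Lemma continuous_on_circle_comp (g : R -> R) (r : Cx -> R) (K : R) :
  (forall p q : Cx, Rabs (r q - r p) <= K * Cnorm (Csub q p)) ->
  (forall p : Cx, Cnorm p = 1 -> continuity_pt g (r p)) ->
  continuous_on_circle (fun z => g (r z)).
Proof.
  intros Hlip Hg p Hp e He.
  destruct (Hg p Hp e He) as [alpha [Halpha Hclose]].
  exists (alpha / (Rabs K + 1)); split.
  { apply Rdiv_lt_0_compat; [lra | pose proof (Rabs_pos K); lra]. }
  intros q _ Hqp.
  destruct (Req_dec (r q) (r p)) as [Heq | Hneq].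
  { rewrite Heq, Rminus_diag, Rabs_R0; exact He. }
  apply (Hclose (r q)); split; [split; [exact I | auto] |].
  change (Rabs (r q - r p) < alpha).
  apply Rmult_lt_compat_r with (r := Rabs K + 1) in Hqp;
    [| pose proof (Rabs_pos K); lra].
  replace (alpha / (Rabs K + 1) * (Rabs K + 1)) with alpha in Hqp
    by (field; pose proof (Rabs_pos K); lra).
  pose proof (Hlip p q).
  pose proof (Rmult_le_compat_r _ _ _ (Cnorm_ge0 (Csub q p)) (Rle_abs K)).
  pose proof (Cnorm_ge0 (Csub q p)).
  nra.
Qed.

Lemma rho_expand (z w : Cx) :
  rho (z, w) =
  Re z * Re z + Im z * Im z + (Re w * Re w + Im w * Im w)
  - Re (Cmul (Cmul (Cmul (Cconj z) (Cconj z)) (Cmul (Cconj z) (Cconj z)))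
             (Cmul w w)) - 1.
Proof.
  unfold rho, Cnorm; cbn [fst snd].
  rewrite !pow2_sqrt by nra; reflexivity.
Qed.

(* The Wirtinger derivatives of
   [rho = z conj z + w conj w - (conj z^4 w^2 + z^4 conj w^2) / 2 - 1]. *)
Definition drho (p : C2) : C2 :=
  let z := fst p in let w := snd p in let zb := Cconj z in
  (Csub zb (Cmul (Cof 2) (Cmul (Cmul z (Cmul z z)) (Cconj (Cmul w w)))),
   Csub (Cconj w) (Cmul (Cmul (Cmul zb zb) (Cmul zb zb)) w)).

Ltac derive_rho :=
  apply is_derive_Reals; eapply is_derive_ext;
  [ intro t; symmetry; apply rho_expand
  | cbn [fst snd Re Im Cmul Cconj Csub Cadd Copp Cof drho];
    auto_derive; [exact I | ring] ].

Lemma is_partial_vec_rho (p : C2) : is_partial_vec rho p (drho p).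
Proof.
  destruct p as [[x y] [u v]].
  set (d := drho (mkC x y, mkC u v)).
  exists (2 * Re (fst d)), (-2 * Im (fst d)), (2 * Re (snd d)), (-2 * Im (snd d)).
  subst d; cbn [fst snd Re Im].
  split; [derive_rho|]. split; [derive_rho|].
  split; [derive_rho|]. split; [derive_rho|].
  split; apply Cx_eq; cbn [Re Im]; field.
Qed.

Lemma rho_cone (z : Cx) (r : R) :
  Cnorm z = 1 -> rho (z, Cmul (Cof r) (Cmul z z)) = 0.
Proof.
  intro Hz; apply Cnorm_eq1 in Hz.
  rewrite rho_expand; destruct z as [x y]; cbn in *; nsatz.
Qed.

Lemma drho_cone (z : Cx) (r : R) :
  Cnorm z = 1 ->
  drho (z, Cmul (Cof r) (Cmul z z)) = (Cmul (Cof (1 - 2 * r ^ 2)) (Cconj z), C0).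
Proof.
  intro Hz; apply Cnorm_eq1 in Hz.
  destruct z as [x y]; unfold drho; cbn [fst snd] in *.
  f_equal; apply Cx_eq; cbn; nsatz.
Qed.

(* On the unit circle [a1 + a2 zeta + conj a1 zeta^2 = zeta (fdisc_coef a1 a2 zeta)]. *)
Definition fdisc_coef (a1 : Cx) (a2 : R) (zeta : Cx) : R :=
  a2 + 2 * (Re a1 * Re zeta + Im a1 * Im zeta).

Lemma fdisc_on_circle (a1 : Cx) (a2 th : R) (zeta : Cx) :
  Cnorm zeta = 1 ->
  fdisc a1 a2 th zeta =
  (Cmul (Cexpi th) zeta,
   Cmul (Cof (fdisc_coef a1 a2 zeta))
        (Cmul (Cmul (Cexpi th) zeta) (Cmul (Cexpi th) zeta))).
Proof.
  intro Hzeta; apply Cnorm_eq1 in Hzeta.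
  unfold fdisc, fdisc_coef, Cexpi; rewrite cos_2a, sin_2a.
  f_equal; apply Cx_eq; cbn; nsatz.
Qed.

Lemma fdisc_coef_bound (a1 : Cx) (a2 : R) (zeta : Cx) :
  Cnorm zeta = 1 -> Rabs (fdisc_coef a1 a2 zeta) <= 2 * Cnorm a1 + Rabs a2.
Proof.
  intro Hzeta; unfold fdisc_coef.
  pose proof (Rabs_inner_le a1 zeta) as Hin; rewrite Hzeta, Rmult_1_r in Hin.
  pose proof (Rabs_triang a2 (2 * (Re a1 * Re zeta + Im a1 * Im zeta))).
  rewrite Rabs_mult, (Rabs_pos_eq 2) in * by lra; lra.
Qed.

Lemma fdisc_coef_lipschitz (a1 : Cx) (a2 : R) (p q : Cx) :
  Rabs (fdisc_coef a1 a2 q - fdisc_coef a1 a2 p) <= 2 * Cnorm a1 * Cnorm (Csub q p).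
Proof.
  replace (fdisc_coef a1 a2 q - fdisc_coef a1 a2 p)
    with (2 * (Re a1 * Re (Csub q p) + Im a1 * Im (Csub q p)))
    by (unfold fdisc_coef; cbn; ring).
  rewrite Rabs_mult, (Rabs_pos_eq 2), Rmult_assoc by lra.
  apply Rmult_le_compat_l; [lra | apply Rabs_inner_le].
Qed.

Lemma stationary_disc_fdisc (a1 : Cx) (a2 th : R) :
  2 * (2 * Cnorm a1 + Rabs a2) ^ 2 < 1 -> stationary_disc rho (fdisc a1 a2 th).
Proof.
  intro Hsmall.
  set (r := fdisc_coef a1 a2).
  assert (Hk : forall zeta, Cnorm zeta = 1 -> 0 < 1 - 2 * r zeta ^ 2).
  { intros zeta Hzeta; pose proof (fdisc_coef_bound a1 a2 zeta Hzeta).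
    pose proof (Rabs_pos (r zeta)); rewrite <- (pow2_abs (r zeta)).
    pose proof (Cnorm_ge0 a1); pose proof (Rabs_pos a2); unfold r in *; nra. }
  assert (Hz : forall zeta, Cnorm zeta = 1 -> Cnorm (Cmul (Cexpi th) zeta) = 1).
  { intros zeta Hzeta; rewrite Cnorm_Cmul, Cnorm_Cexpi, Hzeta; ring. }
  split.
  { intros zeta Hzeta; rewrite fdisc_on_circle by exact Hzeta.
    apply rho_cone, Hz, Hzeta. }
  exists (fun zeta => / (1 - 2 * r zeta ^ 2)).
  split.
  { apply continuous_on_circle_comp with (g := fun x => / (1 - 2 * x ^ 2)) (K := 2 * Cnorm a1).
    - apply fdisc_coef_lipschitz.
    - intros p Hp; specialize (Hk p Hp); reg; lra. }
  split.
  { intros zeta Hzeta; specialize (Hk zeta Hzeta); apply Rinv_neq_0_compat; lra. }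
  exists (fun _ => (Cconj (Cexpi th), C0)).
  split; [apply holomorphic_on_disc_const|].
  split; [apply continuous_on_closed_disc_const|].
  intros zeta Hzeta.
  exists (drho (fdisc a1 a2 th zeta)); split; [apply is_partial_vec_rho|].
  rewrite fdisc_on_circle, drho_cone by auto.
  specialize (Hk zeta Hzeta); apply Cnorm_eq1 in Hzeta; fold r.
  set (k := 1 - 2 * r zeta ^ 2) in *; clearbody k.
  assert (Hkinv : / k * k = 1) by (field; lra).
  unfold C2scale; cbn [fst snd]; f_equal; apply Cx_eq; cbn; nsatz.
Qed.

Theorem mainTheorem10 (eps : R) (a1 : Cx) (a2 th : R) :
  0 < eps -> eps < 1 / 100 ->
  0 <= th < 2 * PI ->
  2 * Cnorm a1 + Rabs a2 < 1 / (4 * (1 + eps) ^ 3) ->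
  stationary_disc rho (fdisc a1 a2 th).
Proof.
  intros Heps _ _ Hsmall.
  apply stationary_disc_fdisc.
  assert (Hquarter : 1 / (4 * (1 + eps) ^ 3) <= 1 / 4).
  { unfold Rdiv; rewrite !Rmult_1_l; apply Rinv_le_contravar; [lra|].
    pose proof (pow_R1_Rle (1 + eps) 3 ltac:(lra)); lra. }
  pose proof (Cnorm_ge0 a1); pose proof (Rabs_pos a2); nra.
Qed.
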